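(* Let $G$ be a graph, $S\subseteq V(G)$, $k$ an integer, and let $\mathcal{C}$ be the set of all inclusion-wise maximal chips. Any chip $C \in \mathcal{C}$ touches at most $3k \cdot 4^{3k}$ other chips of $\mathcal{C}$.
   Context: $N(C)$ is the set of vertices outside $C$ with a neighbour in $C$. For $X,Y\subseteq V(G)$, a set $W$ is an $X-Y$ separator if no connected component of $G\setminus W$ contains both a vertex of $X$ and a vertex of $Y$. $R_H(Z)$ denotes the set of vertices reachable from $Z$ in $H$. An inclusion-wise minimal $X-Y$ separator $W$ is an important $X-Y$ separator if there is no $X-Y$ separator $W'$ with $|W'|\le|W|$ and $R_{G\setminus W}(X\setminus W)\subsetneq R_{G\setminus W'}(X\setminus W')$. For fixed $S$ and $k$, a set $C\subseteq V(G)$ is a chip if $G[C]$ is connected, $|N(C)|\le 3k$, and $N(C)$ is an important $C-S$ separator. Two distinct chips $C_1,C_2\in\mathcal{C}$ touch if $C_1\cap C_2\neq\emptyset$ or there is an edge with one endpoint in $C_1$ and the other in $C_2$. *)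

(* finite simple graphs as symmetric irreflexive relations on a finType. *)
From mathcomp Require Import all_boot.
Set Implicit Arguments. Unset Strict Implicit. Unset Printing Implicit Defensive.

Section Chips.
Variable T : finType.
Variable e : rel T.

Definition avoid (W : {set T}) : rel T := fun x y => [&& e x y, x \notin W & y \notin W].

Definition induced (C : {set T}) : rel T := fun x y => [&& e x y, x \in C & y \in C].

Definition nbh (C : {set T}) : {set T} :=
  [set y | (y \notin C) && [exists x in C, e x y]].

Definition reach (W X : {set T}) : {set T} :=
  [set y | (y \notin W) && [exists x in X :\: W, connect (avoid W) x y]].

Definition separator (X Y W : {set T}) : bool :=
  [forall x in X :\: W, forall y in Y :\: W, ~~ connect (avoid W) x y].

Definition minimal_separator (X Y W : {set T}) : bool :=
  separator X Y W && [forall W' : {set T}, (W' \proper W) ==> ~~ separator X Y W'].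

Definition important_separator (X Y W : {set T}) : bool :=
  minimal_separator X Y W &&
  [forall W' : {set T}, (separator X Y W' && (#|W'| <= #|W|))
                        ==> ~~ (reach W X \proper reach W' X)].

Definition connected_set (C : {set T}) : bool :=
  (C != set0) && [forall x in C, forall y in C, connect (induced C) x y].

Definition chip (S : {set T}) (k : nat) (C : {set T}) : bool :=
  [&& connected_set C, #|nbh C| <= 3 * k & important_separator C S (nbh C)].

Definition max_chip (S : {set T}) (k : nat) (C : {set T}) : bool :=
  chip S k C && [forall D : {set T}, (chip S k D && (C \subset D)) ==> (D == C)].

Definition touch (C1 C2 : {set T}) : bool :=
  (C1 != C2) &&
  ([exists x in C1, x \in C2] || [exists x in C1, exists y in C2, e x y]).

End Chips.

From mathcomp Require Import all_boot zify.
Set Implicit Arguments. Unset Strict Implicit. Unset Printing Implicit Defensive.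

(* A maximal chip touching [C] contains a vertex [v] of N(C), and |N(C)| <= 3k,
   so it suffices that at most 4^(3k) maximal chips contain a fixed [v].  Such a
   chip [D] is the source side of an important [v]-[S] separator of size at most
   K = 3k: it is connected, contains [v], avoids [S], and every larger such set
   has a strictly larger neighbourhood.  These are counted by Marx's branching
   argument: every important set contains the furthest minimum separator [M];
   branching on a vertex of N(M) lowers the measure 2K - lambda, where lambda
   is the minimum neighbourhood size, so there are at most 2^(2K) of them. *)

Section ChipCounting.
Variables (T : finType) (e : rel T).
Implicit Types (A B D I M U W X Y Z : {set T}).

Lemma connect_exit (r : rel T) (P : pred T) x y :
  connect r x y -> P x -> ~~ P y -> exists a b, [/\ r a b, P a & ~~ P b].
Proof.
move/connectP=> [p pth ->] {y}; elim: p x pth => [|z p IH] x /=; first by move=> _ ->.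
case/andP=> rxz pth Px Pl; case Pz: (P z); first exact: IH pth Pz Pl.
by exists x, z; rewrite Pz.
Qed.

Lemma connect_induced_mem D x y : connect (induced e D) x y -> x \in D -> y \in D.
Proof.
move=> c xD; apply: contraT => yD.
by have [a [b [/and3P[_ _ bD] _ /negP]]] := connect_exit (P := [pred z | z \in D]) c xD yD.
Qed.

Lemma connect_induced_sub D D' x y :
  D \subset D' -> connect (induced e D) x y -> connect (induced e D') x y.
Proof.
move=> sDD'; apply: connect_sub => a b /and3P[eab aD bD]; apply: connect1.
by rewrite /induced eab !(subsetP sDD').
Qed.

Lemma nbhP w A : reflect (w \notin A /\ exists2 x, x \in A & e x w) (w \in nbh e A).
Proof.
rewrite inE; apply: (iffP andP) => [[wA /exists_inP[x]]|[wA [x xA exw]]].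
  by split=> //; exists x.
by split=> //; apply/exists_inP; exists x.
Qed.

Lemma nbh_notin w A : w \in nbh e A -> w \notin A.
Proof. by case/nbhP. Qed.

Lemma connect_avoid_nbh A x y : connect (avoid e (nbh e A)) x y -> x \in A -> y \in A.
Proof.
move=> c xA; apply: contraT => yA.
have [a [b [/and3P[eab _ /negP bN] aA bA]]] :=
  connect_exit (P := [pred z | z \in A]) c xA yA.
by case: bN; apply/nbhP; split=> //; exists a.
Qed.

Lemma nbhUI_subU A B : nbh e (A :|: B) :|: nbh e (A :&: B) \subset nbh e A :|: nbh e B.
Proof.
apply/subsetP=> w; rewrite !in_setU => /orP[] /nbhP[+ [x + exw]]; rewrite !(in_setU, in_setI).
  rewrite negb_or => /andP[wA wB] /orP[xA|xB]; apply/orP; [left|right];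
    by apply/nbhP; split=> //; exists x.
rewrite negb_and => wAB /andP[xA xB]; apply/orP.
by case/orP: wAB => [wA|wB]; [left|right]; apply/nbhP; split=> //; exists x.
Qed.

Lemma nbhUI_subI A B : nbh e (A :|: B) :&: nbh e (A :&: B) \subset nbh e A :&: nbh e B.
Proof.
apply/subsetP=> w /setIP[/nbhP[+ _] /nbhP[_ [x + exw]]].
rewrite in_setU in_setI negb_or => /andP[wA wB] /andP[xA xB].
by apply/setIP; split; apply/nbhP; split=> //; exists x.
Qed.

(* The part of the separator that is still to be paid for: vertices of [Z]
   were put into the separator by earlier branching decisions. *)
Definition cut Z A := #|nbh e A :\: Z|.

Lemma cut_submod Z A B : cut Z (A :|: B) + cut Z (A :&: B) <= cut Z A + cut Z B.
Proof.
rewrite /cut -cardsUI -[#|nbh e A :\: Z| + _]cardsUI -!setDUl -!setDIl.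
by apply: leq_add; apply/subset_leq_card/setSD; [apply: nbhUI_subU | apply: nbhUI_subI].
Qed.

Definition rooted X D := [forall y in D, [exists x in X, connect (induced e D) x y]].

Lemma rootedP X D :
  reflect (forall y, y \in D -> exists2 x, x \in X & connect (induced e D) x y) (rooted X D).
Proof.
apply: (iffP forall_inP) => rD y /rD; first by case/exists_inP=> x; exists x.
by case=> x xX c; apply/exists_inP; exists x.
Qed.

Lemma rootedU X A B : rooted X A -> rooted X B -> rooted X (A :|: B).
Proof.
move=> /rootedP rA /rootedP rB; apply/rootedP=> y /setUP[/rA|/rB] [x xX c];
  exists x => //; apply: connect_induced_sub c; [exact: subsetUl | exact: subsetUr].
Qed.

Lemma rootedS X Y D : X \subset Y -> rooted X D -> rooted Y D.
Proof.
by move=> sXY /rootedP rD; apply/rootedP=> y /rD [x xX c]; exists x; rewrite ?(subsetP sXY).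
Qed.

Lemma rooted_trans X M A : rooted X M -> M \subset A -> rooted M A -> rooted X A.
Proof.
move=> /rootedP rM sMA /rootedP rA; apply/rootedP=> y /rA [z /rM [x xX cxz] czy].
by exists x => //; apply: connect_trans czy; apply: connect_induced_sub cxz.
Qed.

Lemma rooted_setU1 M A x u :
  x \in M -> e x u -> M \subset A -> u \in A -> rooted (u |: M) A -> rooted M A.
Proof.
move=> xM exu sMA uA /rootedP rA; apply/rootedP=> y /rA [z /setU1P[->|zM] c]; last by exists z.
exists x => //; apply: connect_trans c; apply: connect1.
by rewrite /induced exu uA (subsetP sMA).
Qed.

Definition rooted_part X I := [set y in I | [exists x in X, connect (induced e I) x y]].

Lemma rooted_part_sub X I : rooted_part X I \subset I.
Proof. by apply/subsetP=> y /setIdP[]. Qed.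

Lemma sub_rooted_part X I : X \subset I -> X \subset rooted_part X I.
Proof.
move=> sXI; apply/subsetP=> x xX; rewrite inE (subsetP sXI) //=.
by apply/exists_inP; exists x.
Qed.

Lemma rooted_rooted_part X I : X \subset I -> rooted X (rooted_part X I).
Proof.
move=> sXI; set R := rooted_part X I.
apply/rootedP=> y /setIdP[yI /exists_inP[x xX c]]; exists x => //.
have xR : x \in R by apply: (subsetP (sub_rooted_part sXI)).
apply: contraT => ncy.
have [a [b [/and3P[eab aI bI] cxa ncxb]]] :=
  connect_exit (P := connect (induced e R) x) c (connect0 _ _) ncy.
have aR : a \in R := connect_induced_mem cxa xR.
have bR : b \in R.
  rewrite inE bI; apply/exists_inP; exists x => //.
  apply: connect_trans (connect_induced_sub (rooted_part_sub X I) cxa) (connect1 _).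
  by rewrite /induced eab aI bI.
case/negP: ncxb; apply: connect_trans cxa (connect1 _).
by rewrite /induced eab aR bR.
Qed.

Lemma cut_rooted_part Z X I : cut Z (rooted_part X I) <= cut Z I.
Proof.
apply/subset_leq_card/setSD/subsetP=> w /nbhP[wR [x xR exw]].
have xI := subsetP (rooted_part_sub X I) x xR.
apply/nbhP; split; last by exists x.
apply: contra wR => wI; move: xR; rewrite !inE wI => /andP[_ /exists_inP[x0 x0X c]].
apply/exists_inP; exists x0 => //; apply: connect_trans c (connect1 _).
by rewrite /induced exw xI wI.
Qed.

Definition admissible U X D := [&& X \subset D, rooted X D & D \subset U].

Lemma admissibleU U X A B :
  admissible U X A -> admissible U X B -> admissible U X (A :|: B).
Proof.
case/and3P=> sXA rA sAU /and3P[_ rB sBU].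
by rewrite /admissible (subset_trans sXA (subsetUl _ _)) rootedU // subUset sAU.
Qed.

Lemma cutU_min U Z X A M :
  admissible U X A -> admissible U X M ->
  (forall B, admissible U X B -> cut Z M <= cut Z B) ->
  cut Z (A :|: M) <= cut Z A.
Proof.
case/and3P=> sXA _ sAU /and3P[sXM _ _] Mmin.
have sXAM : X \subset A :&: M by rewrite subsetI sXA sXM.
have core : admissible U X (rooted_part X (A :&: M)).
  rewrite /admissible sub_rooted_part // rooted_rooted_part //.
  by rewrite (subset_trans (rooted_part_sub _ _) (subset_trans (subsetIl _ _) sAU)).
have := cut_submod Z A M; have := cut_rooted_part Z X (A :&: M); have := Mmin _ core.
lia.
Qed.

(* The furthest minimum separator; it exists because, by submodularity, the
   union of two admissible sets of minimum cut again has minimum cut. *)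
Lemma extremal_exists U Z X A0 : admissible U X A0 ->
  exists M, [/\ admissible U X M,
    forall A, admissible U X A -> cut Z M <= cut Z A &
    forall A, admissible U X A -> cut Z A <= cut Z M -> A \subset M].
Proof.
move=> adm0.
case: (arg_minnP (cut Z) adm0) => M0 adm0' M0min.
pose minimizer A := admissible U X A && (cut Z A == cut Z M0).
have minM0 : minimizer M0 by rewrite /minimizer adm0' eqxx.
case: (arg_maxnP (fun A => #|A|) minM0) => M /andP[admM /eqP cutM] Mmax.
have Mmin B : admissible U X B -> cut Z M <= cut Z B by rewrite cutM; apply: M0min.
exists M; split=> // A admA cutA.
have cutAM : cut Z (A :|: M) = cut Z M.
  apply/eqP; rewrite eqn_leq Mmin ?admissibleU // andbT.
  exact: leq_trans (cutU_min admA admM Mmin) cutA.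
have : #|A :|: M| <= #|M| by apply: Mmax; rewrite /minimizer (admissibleU admA admM) cutAM cutM eqxx.
rewrite (geq_leqif (subset_leqif_card (subsetUr A M))).
exact: subset_trans (subsetUl A M).
Qed.

Definition important U Z X K D :=
  [&& admissible U X D, cut Z D <= K &
      [forall A, (admissible U X A && (D \proper A)) ==> (cut Z D < cut Z A)]].

Lemma importantP U Z X K D :
  reflect [/\ admissible U X D, cut Z D <= K &
              forall A, admissible U X A -> D \proper A -> cut Z D < cut Z A]
          (important U Z X K D).
Proof.
apply: (iffP and3P) => [[admD cutD /forallP impD]|[admD cutD impD]]; split=> //.
  by move=> A admA pDA; apply: (implyP (impD A)); rewrite admA.
by apply/forallP=> A; apply/implyP=> /andP[]; apply: impD.
Qed.

Lemma important_extremal_sub U Z X K M D :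
  admissible U X M -> (forall A, admissible U X A -> cut Z M <= cut Z A) ->
  important U Z X K D -> M \subset D.
Proof.
move=> admM Mmin /importantP[admD _ impD].
have : ~~ (cut Z D < cut Z (D :|: M)) by rewrite -leqNgt (cutU_min admD admM Mmin).
by apply: contraR => nsub; apply/impD/properUl; rewrite ?admissibleU.
Qed.

Lemma admissible_sub U X M D :
  X \subset M -> [disjoint U & nbh e M] -> admissible U X D -> D \subset M.
Proof.
move=> sXM dUN /and3P[_ /rootedP rD sDU]; apply/subsetP=> y yD.
have [x xX c] := rD y yD; apply: contraT => yM.
have [a [b [/and3P[eab aD bD] aM bM]]] :=
  connect_exit (P := [pred z | z \in M]) c (subsetP sXM x xX) yM.
have bN : b \in nbh e M by apply/nbhP; split=> //; exists a.
by move: dUN; rewrite disjoints_subset => /subsetP/(_ b (subsetP sDU b bD)); rewrite inE bN.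
Qed.

Lemma admissible_setU1 U X M A x u :
  X \subset M -> rooted X M -> x \in M -> e x u ->
  admissible U (u |: M) A -> admissible U X A.
Proof.
move=> sXM rM xM exu /and3P[sMA rA sAU]; rewrite subUset sub1set in sMA.
case/andP: sMA => uA sMA.
rewrite /admissible (subset_trans sXM sMA) sAU andbT.
exact: rooted_trans rM sMA (rooted_setU1 xM exu sMA uA rA).
Qed.

Lemma important_setU1 U Z X K M D x u :
  X \subset M -> rooted X M -> x \in M -> e x u -> M \subset D -> u \in D ->
  important U Z X K D -> important U Z (u |: M) K D.
Proof.
move=> sXM rM xM exu sMD uD /importantP[/and3P[_ rD sDU] cutD impD].
apply/importantP; split=> // [|A admA]; last exact/impD/(admissible_setU1 sXM rM xM exu).
rewrite /admissible subUset sub1set uD sMD sDU /= andbT.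
by apply: rootedS rD; apply: subset_trans sXM (subsetUr _ _).
Qed.

Lemma cut_setU1 Z A u : cut Z A <= (cut (u |: Z) A).+1.
Proof. by rewrite /cut (cardsD1 u (nbh e A :\: Z)) setDDl setUC; case: (u \in _). Qed.

Lemma cut_setU1_nbh Z A u : u \in nbh e A -> u \notin Z -> cut Z A = (cut (u |: Z) A).+1.
Proof. by move=> uN uZ; rewrite /cut (cardsD1 u) in_setD uZ uN setDDl setUC. Qed.

Lemma important_setD1 U Z X K D u :
  u \in nbh e D -> u \notin Z ->
  important U Z X K D -> important (U :\ u) (u |: Z) X K.-1 D.
Proof.
move=> uN uZ /importantP[/and3P[sXD rD sDU] cutD impD].
have cutDu := cut_setU1_nbh uN uZ.
apply/importantP; split; first by rewrite /admissible sXD rD subsetD1 sDU nbh_notin.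
  by move: cutD; rewrite cutDu; lia.
move=> A /and3P[sXA rA]; rewrite subsetD1 => /andP[sAU _] pDA.
have := impD A (introT and3P (And3 sXA rA sAU)) pDA; have := cut_setU1 Z A u.
by rewrite cutDu; lia.
Qed.

(* [measure_le m U Z X K] says that the measure 2K - lambda is at most [m],
   where lambda is the least cut of an admissible set. *)
Definition measure_le m U Z X K :=
  forall A, admissible U X A -> 2 * K <= m + cut Z A.

Lemma measure_setU1 m U Z X K M x u :
  admissible U X M ->
  (forall A, admissible U X A -> cut Z A <= cut Z M -> A \subset M) ->
  x \in M -> e x u -> u \notin M ->
  measure_le m.+1 U Z X K -> measure_le m U Z (u |: M) K.
Proof.
move=> admM Mmax xM exu uM meas A admA.
case/and3P: (admM) => sXM rM _.
have admXA := admissible_setU1 sXM rM xM exu admA.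
have : cut Z M < cut Z A.
  rewrite ltnNge; apply: contra uM => /(Mmax _ admXA)/subsetP; apply.
  by case/and3P: admA => /subsetP-> //; rewrite setU11.
by have := meas M admM; lia.
Qed.

Lemma measure_setD1 m U Z X K u :
  measure_le m.+1 U Z X K -> measure_le m (U :\ u) (u |: Z) X K.-1.
Proof.
move=> meas A /and3P[sXA rA]; rewrite subsetD1 => /andP[sAU _].
by have := meas A (introT and3P (And3 sXA rA sAU)); have := cut_setU1 Z A u; lia.
Qed.

Lemma important_split U Z X K M D x u :
  admissible U X M -> M \subset D -> x \in M -> e x u -> u \notin Z ->
  important U Z X K D ->
  important U Z (u |: M) K D || important (U :\ u) (u |: Z) X K.-1 D.
Proof.
case/and3P=> sXM rM _ sMD xM exu uZ impD.
have [uD|uD] := boolP (u \in D); first by rewrite (important_setU1 sXM rM xM exu sMD).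
have uN : u \in nbh e D by apply/nbhP; split=> //; exists x; rewrite ?(subsetP sMD).
by rewrite important_setD1 ?orbT.
Qed.

(* Branch on a boundary vertex [u] of the furthest minimum separator [M]:
   either [u] joins the source side, which raises the least cut, or [u] is
   paid for in the separator, which lowers the budget; both lower the measure. *)
Lemma card_important m U Z X K :
  [disjoint U & Z] -> measure_le m U Z X K ->
  #|[set D | important U Z X K D]| <= 2 ^ m.
Proof.
elim/ltn_ind: m U Z X K => m IH U Z X K dUZ meas.
have [->|[D0]] := set_0Vmem [set D | important U Z X K D]; first by rewrite cards0.
rewrite inE => /importantP[admD0 cutD0 _].
have [M [admM Mmin Mmax]] := extremal_exists Z admD0.
have supM D : important U Z X K D -> M \subset D := important_extremal_sub admM Mmin.
have [dUN|[u /setIP[uU uN]]] := set_0Vmem (U :&: nbh e M).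
  apply: (@leq_trans #|[set M]|); last by rewrite cards1 expn_gt0.
  apply/subset_leq_card/subsetP=> D; rewrite !inE => impD.
  have [admD _ _] := and3P impD.
  rewrite eqEsubset supM // andbT; apply: admissible_sub admD.
    by case/and3P: admM.
  by rewrite -setI_eq0 dUN.
have uZ : u \notin Z by rewrite (disjointFr dUZ uU).
case/nbhP: (uN) => uM [x xM exu].
have cutM_gt0 : 0 < cut Z M.
  by rewrite card_gt0; apply/set0Pn; exists u; rewrite in_setD uZ uN.
have cutM_le : cut Z M <= K := leq_trans (Mmin _ admD0) cutD0.
case: m IH meas => [|m] IH meas; first by have := meas M admM; lia.
have dUZu : [disjoint U :\ u & u |: Z].
  rewrite disjoints_subset; apply/subsetP=> y; rewrite !inE negb_or => /andP[-> yU].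
  by rewrite (disjointFr dUZ yU).
apply: (@leq_trans #|[set D | important U Z (u |: M) K D] :|:
                     [set D | important (U :\ u) (u |: Z) X K.-1 D]|).
  apply/subset_leq_card/subsetP=> D; rewrite !inE => impD.
  exact: important_split admM (supM _ impD) xM exu uZ impD.
apply: leq_trans (leq_card_setU _ _).1 _; rewrite expnS mul2n -addnn.
apply: leq_add; apply: IH => //.
  exact: measure_setU1 admM Mmax xM exu uM meas.
exact: measure_setD1.
Qed.

Lemma separatorP X Y W :
  reflect (forall x y, x \in X -> x \notin W -> y \in Y -> y \notin W ->
             ~~ connect (avoid e W) x y)
          (separator e X Y W).
Proof.
apply: (iffP forall_inP) => [sep x y xX xW yY yW | sep x /setDP[xX xW]].
  by apply: (forall_inP (sep x _)); rewrite in_setD ?xW ?xX ?yW ?yY.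
by apply/forall_inP=> y /setDP[yY yW]; apply: sep.
Qed.

Lemma reach_nbh_rooted v D B :
  v \in D -> D \subset B -> rooted [set v] B -> reach e (nbh e B) D = B.
Proof.
move=> vD sDB /rootedP rB; apply/setP=> y; rewrite inE.
apply/idP/idP => [/andP[_ /exists_inP[x /setDP[xD _] c]]|yB].
  exact: connect_avoid_nbh c (subsetP sDB x xD).
have notN z : z \in B -> z \notin nbh e B by move=> zB; apply: contraL zB => /nbh_notin.
rewrite notN //=; apply/exists_inP; exists v; first by rewrite inE vD notN ?(subsetP sDB).
have [_ /set1P-> c] := rB y yB; apply: connect_sub c => a b /and3P[eab aB bB].
by apply: connect1; rewrite /avoid eab !notN.
Qed.

Lemma max_chip_important S k D v :
  max_chip e S k D -> v \in D -> important (~: S) set0 [set v] (3 * k) D.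
Proof.
case/andP=> /and3P[/andP[_ /forall_inP cD] nbhD /andP[/andP[/separatorP sepD _] impD]] _ vD.
have rD : rooted [set v] D.
  by apply/rootedP=> y yD; exists v; rewrite ?inE //; apply: (forall_inP (cD v vD)).
have sDS : D \subset ~: S.
  apply/subsetP=> y yD; rewrite inE; apply/negP=> yS.
  have yN : y \notin nbh e D by apply: contraL yD => /nbh_notin.
  by case/negP: (sepD y y yD yN yS yN).
apply/importantP; split; first by rewrite /admissible sub1set vD rD sDS.
  by rewrite /cut setD0.
move=> A /and3P[_ rA sAS] pDA; rewrite /cut !setD0 ltnNge.
have sepA : separator e D S (nbh e A).
  apply/separatorP=> x y xD _ yS _; apply/negP => /connect_avoid_nbh.
  move/(_ (subsetP (proper_sub pDA) x xD))/(subsetP sAS).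
  by rewrite inE yS.
apply/negP => cutA; have := implyP (forallP impD (nbh e A)).
rewrite sepA cutA (reach_nbh_rooted vD (subxx D) rD).
by rewrite (reach_nbh_rooted vD (proper_sub pDA) rA) pDA => /(_ isT).
Qed.

Lemma touch_max_chip_nbh S k C D :
  max_chip e S k C -> max_chip e S k D -> touch e C D ->
  exists2 v, v \in nbh e C & v \in D.
Proof.
move=> mC /andP[/and3P[/andP[_ /forall_inP cD] _ _] Dmax] /andP[neCD tCD].
have meet x : x \in C -> x \in D -> exists2 v, v \in nbh e C & v \in D.
  move=> xC xD; have /subsetPn[z zD zC] : ~~ (D \subset C).
    apply: contra neCD => sDC.
    by apply: (implyP (forallP Dmax C)); rewrite (andP mC).1 sDC.
  have [a [b [/and3P[eab aD bD] aC bC]]] :=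
    connect_exit (P := [pred w | w \in C]) (forall_inP (cD x xD) z zD) xC zC.
  by exists b => //; apply/nbhP; split=> //; exists a.
case/orP: tCD => [/exists_inP[x xC xD]|/exists_inP[x xC /exists_inP[y yD exy]]].
  exact: meet xC xD.
have [yC|yC] := boolP (y \in C); first exact: meet yC yD.
by exists y => //; apply/nbhP; split=> //; exists x.
Qed.

End ChipCounting.

Lemma card_bigcup_le (I T : finType) (P : pred I) (F : I -> {set T}) :
  #|\bigcup_(i | P i) F i| <= \sum_(i | P i) #|F i|.
Proof.
elim/big_rec2: _ => [|i s U _ IH]; first by rewrite cards0.
by apply: leq_trans (leq_card_setU _ _).1 _; rewrite leq_add2l.
Qed.

Theorem lemma3p7 (T : finType) (e : rel T) (e_sym : symmetric e) (e_irr : irreflexive e)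
  (S : {set T}) (k : nat) (C : {set T}) :
  max_chip e S k C ->
  #|[set D : {set T} | max_chip e S k D & touch e C D]| <= 3 * k * 4 ^ (3 * k).
Proof.
move=> mC; pose chips_at v := [set D : {set T} | max_chip e S k D & v \in D].
have cover : [set D | max_chip e S k D & touch e C D] \subset \bigcup_(v in nbh e C) chips_at v.
  apply/subsetP=> D; rewrite inE => /andP[mD tD]; have [v vN vD] := touch_max_chip_nbh mC mD tD.
  by apply/bigcupP; exists v => //; rewrite inE mD vD.
have card_chips_at v : #|chips_at v| <= 4 ^ (3 * k).
  apply: leq_trans (_ : #|[set D | important e (~: S) set0 [set v] (3 * k) D]| <= _).
    apply/subset_leq_card/subsetP=> D; rewrite !inE => /andP[mD vD].
    exact: max_chip_important mD vD.
  rewrite -[4]/(2 ^ 2) -expnM; apply: card_important => [|A _]; last exact: leq_addr.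
  by rewrite disjoints_subset setC0 subsetT.
apply: leq_trans (subset_leq_card cover) _; apply: leq_trans (card_bigcup_le _ _) _.
apply: (@leq_trans (\sum_(v in nbh e C) 4 ^ (3 * k))); first exact: leq_sum.
by rewrite sum_nat_const leq_mul2r; case/andP: mC => /and3P[_ -> _]; rewrite orbT.
Qed.
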